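(* With the notation of the context, let $\beta^*=\inf_{x\in\Delta}F(x)$. Then there exists $x^*\in\Delta$ with $F(x^* )=\beta^*$.
   Context: Fix an integer $n\ge2$ and free generators $\xi_1,\dots,\xi_n$ of a free group; throughout $i,j,k\in\{1,\dots,n\}$ and $t,s,p\in\{-1,+1\}$. Let $\Psi$ be the set of reduced words $\xi_i^{2t}$; $\xi_i^t\xi_j^{2s}$ ($i\ne j$); $\xi_i^t\xi_j^s\xi_k^p$ ($i\ne j$, $j\ne k$). For a letter $\xi_a^x$ let $S(\xi_a^x)\subset\Psi$ be the set of words in $\Psi$ beginning with $\xi_a^x$, namely $\{\xi_a^{2x}\}\cup\{\xi_a^x\xi_j^{2s}\}\cup\{\xi_a^x\xi_j^s\xi_k^p\}$; for $a\ne b$ let $S(\xi_a^x\xi_b^y)=\{\xi_a^x\xi_b^{2y}\}\cup\{\xi_a^x\xi_b^y\xi_k^p: k\ne b\}$. A relation $r$ is a pair $(\psi_r,\Psi_r)$ with $\psi_r\in\Psi$, $\Psi_r\subseteq\Psi$. Let $\mathcal{F}$ be the collection of the following relations (indices $i_0\ne j_0$, in type 5a $i_0,j_0,k_0$ pairwise distinct, all signs arbitrary): 1a: $\psi_r=\xi_{i_0}^{2t_0}$, $\Psi_r=\Psi\setminus S(\xi_{i_0}^{t_0})$; 2b: $\psi_r=\xi_{i_0}^{t_0}\xi_{j_0}^{2s_0}$, $\Psi_r=\Psi\setminus S(\xi_{i_0}^{t_0}\xi_{j_0}^{s_0})$; 3a: $\psi_r=\xi_{i_0}^{t_0}\xi_{j_0}^{s_0}\xi_{i_0}^{t_0}$,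 $\Psi_r=\Psi\setminus S(\xi_{j_0}^{s_0}\xi_{i_0}^{t_0})$; 4b: $\psi_r=\xi_{i_0}^{t_0}\xi_{j_0}^{s_0}\xi_{i_0}^{-t_0}$, $\Psi_r=S(\xi_{i_0}^{t_0})$; 5a: $\psi_r=\xi_{i_0}^{t_0}\xi_{j_0}^{s_0}\xi_{k_0}^{p_0}$, $\Psi_r=\Psi\setminus S(\xi_{j_0}^{s_0}\xi_{k_0}^{p_0})$. Let $\Delta=\{x\in\mathbb{R}^\Psi: x(\psi)>0\ \forall\psi,\ \sum_{\psi}x(\psi)=1\}$. For a relation $r$ and $x\in\Delta$ put $x_r=x(\psi_r)$, $X_r=\sum_{\psi\in\Psi_r}x(\psi)$, $f_r(x)=\frac{1-x_r}{x_r}\cdot\frac{1-X_r}{X_r}$, and $F(x)=\max_{r\in\mathcal{F}}f_r(x)$. *)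

From HB Require Import structures.
From mathcomp Require Import all_boot all_order all_algebra.
From mathcomp Require Import boolp classical_sets reals.
Set Implicit Arguments. Unset Strict Implicit. Unset Printing Implicit Defensive.
Import Order.TTheory GRing.Theory Num.Theory.
Local Open Scope ring_scope.
Local Open Scope classical_set_scope.

(* A letter xi_i^t : generator index i : 'I_n, sign t : bool (true = +1, false = -1). *)
Definition letter (n : nat) : finType := ('I_n * bool)%type.
Definition inv_letter n (a : letter n) : letter n := (a.1, ~~ a.2).

(* A word of length 2 or 3 : first letter, second letter, optional third letter. *)
Definition word (n : nat) : finType := (letter n * letter n * option (letter n))%type.

(* Membership in Psi:
   (a, a, None)         = xi_i^{2t}                      (a = xi_i^t)
   (a, b, Some b)       = xi_i^t xi_j^{2s},  i <> j       (a = xi_i^t, b = xi_j^s)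
   (a, b, Some c)       = xi_i^t xi_j^s xi_k^p, i <> j, j <> k. *)
Definition in_Psi n (w : word n) : bool :=
  match w with
  | (a, b, None) => a == b
  | (a, b, Some c) => (a.1 != b.1) && ((c == b) || (c.1 != b.1))
  end.

Definition Psi (n : nat) : finType := {w : word n | in_Psi w}.

Definition S1 n (a : letter n) : {set Psi n} := [set w : Psi n | (val w).1.1 == a].
Definition S2 n (a b : letter n) : {set Psi n} := [set w : Psi n | (val w).1 == (a, b)].

(* A relation r = (psi_r, Psi_r). *)
Definition relation (n : nat) : finType := (Psi n * {set Psi n})%type.

Definition in_F n (r : relation n) : bool :=
  [||
      [exists i0 : 'I_n, exists t0 : bool,
        (val r.1 == ((i0, t0), (i0, t0), None)) && (r.2 == ~: S1 (i0, t0))],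
      [exists i0 : 'I_n, exists j0 : 'I_n, exists t0 : bool, exists s0 : bool,
        [&& i0 != j0, val r.1 == ((i0, t0), (j0, s0), Some (j0, s0))
          & r.2 == ~: S2 (i0, t0) (j0, s0)]],
      [exists i0 : 'I_n, exists j0 : 'I_n, exists t0 : bool, exists s0 : bool,
        [&& i0 != j0, val r.1 == ((i0, t0), (j0, s0), Some (i0, t0))
          & r.2 == ~: S2 (j0, s0) (i0, t0)]],
      [exists i0 : 'I_n, exists j0 : 'I_n, exists t0 : bool, exists s0 : bool,
        [&& i0 != j0, val r.1 == ((i0, t0), (j0, s0), Some (i0, ~~ t0))
          & r.2 == S1 (i0, t0)]]
    |
      [exists i0 : 'I_n, exists j0 : 'I_n, exists k0 : 'I_n,
       exists t0 : bool, exists s0 : bool, exists p0 : bool,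
        [&& i0 != j0, j0 != k0, i0 != k0,
            val r.1 == ((i0, t0), (j0, s0), Some (k0, p0))
          & r.2 == ~: S2 (j0, s0) (k0, p0)]]].

Definition Delta (R : realType) (n : nat) : set (Psi n -> R) :=
  [set x | (forall p, 0 < x p) /\ \sum_(p : Psi n) x p = 1].

Definition x_r (R : realType) n (r : relation n) (x : Psi n -> R) : R := x r.1.
Definition X_r (R : realType) n (r : relation n) (x : Psi n -> R) : R :=
  \sum_(p in r.2) x p.

Definition f_r (R : realType) n (r : relation n) (x : Psi n -> R) : R :=
  (1 - x_r r x) / x_r r x * ((1 - X_r r x) / X_r r x).

(* F(x) = max_{r in F} f_r(x).  Taken as a big max with neutral element 0;
   on Delta every f_r(x) is > 0 and F is nonempty, so this is the genuine max. *)
Definition FF (R : realType) n (x : Psi n -> R) : R :=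
  \big[Num.max/0]_(r : relation n | in_F r) f_r r x.

(* Take B = F(x0) for the barycentre x0 of Delta.  On the sublevel set
   {F <= B}, every product odds(x_r) * odds(X_r), with odds(u) = (1 - u)/u, is
   at most B.  The relations of type 4b force each S(xi_i^t) to carry a mass
   bounded away from 0 and 1, then each word xi_i^t xi_j^s xi_i^-t a weight
   bounded away from 0, hence each S(xi_i^t xi_j^s) a mass bounded away from 1.
   Every word of Psi is the psi_r of a relation of F whose Psi_r is one of these
   sets or a complement, so every coordinate of a point of {F <= B} is at least
   some delta(B) > 0.  The sublevel set thus lies in the compact set
   {x >= delta, sum x = 1} inside Delta, where F is continuous and attains its
   minimum, which is then the infimum of F over Delta. *)
From HB Require Import structures.
From mathcomp Require Import all_boot all_order all_algebra.
From mathcomp Require Import boolp classical_sets reals.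
From mathcomp Require Import ring lra topology normedtype derive.
Import Order.TTheory GRing.Theory Num.Theory.
Import numFieldNormedType.Exports ArrowAsProduct.
Local Open Scope ring_scope.
Local Open Scope classical_set_scope.

Set Implicit Arguments.
Unset Strict Implicit.
Unset Printing Implicit Defensive.

Section Odds.
Variable R : realFieldType.
Implicit Types a b c m B : R.

Definition odds a := (1 - a) / a.

Lemma odds_mul a : 0 < a -> odds a * a = 1 - a.
Proof. by move=> a_gt0; rewrite mulfVK // gt_eqF. Qed.

Lemma odds_ge0 a : 0 < a -> a <= 1 -> 0 <= odds a.
Proof. by move=> a_gt0 a_le1; rewrite divr_ge0 ?subr_ge0 // ltW. Qed.

Lemma le_odds a b : 0 < a -> a <= b -> odds b <= odds a.
Proof.
move=> a_gt0 ab; have b_gt0 := lt_le_trans a_gt0 ab.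
rewrite ler_pdivrMr // mulrAC ler_pdivlMr //; nra.
Qed.

Lemma odds_mul_le_lb B a b c : 0 < a -> a <= 1 -> 0 < b -> b <= 1 - c ->
  0 < c -> odds a * odds b <= B -> c / (c + B) <= a.
Proof.
move=> a_gt0 a_le1 b_gt0 bc c_gt0 le_B.
have oa := odds_mul a_gt0; have ob := odds_mul b_gt0.
have oa_ge0 := odds_ge0 a_gt0 a_le1.
have c_le_ob : c <= odds b by nra.
have B_ge0 : 0 <= B by nra.
rewrite ler_pdivrMr; nra.
Qed.

Lemma odds_mul_le_lb_ge B a m : 0 < a -> a <= m -> m <= 1 ->
  odds a * odds m <= B -> 1 / (B + 2) <= m.
Proof.
move=> a_gt0 am m_le1 le_B; have m_gt0 := lt_le_trans a_gt0 am.
have om_ge0 := odds_ge0 m_gt0 m_le1; have om := odds_mul m_gt0.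
have om_sqr : odds m * odds m <= B.
  by apply: le_trans le_B; rewrite ler_wpM2r // le_odds.
have om_le : odds m <= B + 1 by nra.
rewrite ler_pdivrMr; nra.
Qed.

End Odds.

Section Weights.
Variables (R : realDomainType) (T : finType) (x : T -> R).
Hypotheses (x_gt0 : forall p, 0 < x p) (x_sum1 : \sum_p x p = 1).

Lemma mass_subset (A B : {set T}) : A \subset B ->
  \sum_(p in A) x p <= \sum_(p in B) x p.
Proof.
move=> /fintype.subsetP AB.
rewrite [leLHS]big_mkcond [leRHS]big_mkcond ler_sum // => p _.
by case: ifP => [/AB -> //|_]; case: ifP => // _; apply: ltW.
Qed.

Lemma mass_setC (A : {set T}) : \sum_(p in ~: A) x p = 1 - \sum_(p in A) x p.
Proof.
rewrite -x_sum1 [in RHS](bigID (mem A)) /= addrC addrK.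
by apply: eq_bigl => p; rewrite inE.
Qed.

Lemma le_mass (A : {set T}) p : p \in A -> x p <= \sum_(q in A) x q.
Proof.
by move=> pA; rewrite (bigD1 p) //= lerDl sumr_ge0 // => q _; apply: ltW.
Qed.

Lemma mass_le1 (A : {set T}) : \sum_(p in A) x p <= 1.
Proof.
rewrite -x_sum1 [leRHS](bigID (mem A)) /= lerDl.
by rewrite sumr_ge0 // => p _; apply: ltW.
Qed.

Lemma weight_le1 p : x p <= 1.
Proof.
by rewrite -x_sum1 (bigD1 p) //= lerDl sumr_ge0 // => q _; apply: ltW.
Qed.

End Weights.

Section Relations.
Variable n : nat.
Implicit Types (p : Psi n) (u v w : letter n).

Lemma exists_neq_ord (i : 'I_n) : (1 < n)%N -> exists j : 'I_n, i != j.
Proof.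
move=> n_gt1; have n_gt0 := ltn_trans (ltnSn 0) n_gt1.
have [i0|i_gt0] := posnP i.
  by exists (Ordinal n_gt1); rewrite -val_eqE /= i0.
by exists (Ordinal n_gt0); rewrite -val_eqE /= eqn0Ngt i_gt0.
Qed.

Lemma inv_letter_neq u : (u == inv_letter u) = false.
Proof. by case: u => i []; apply/negbTE/eqP => -[]. Qed.

Lemma eq_inv_letter u w : w.1 = u.1 -> w != u -> w = inv_letter u.
Proof.
case: u w => [i t] [j s] /= -> .
by rewrite /inv_letter /= xpair_eqE eqxx; case: s; case: t.
Qed.

Lemma in_F_1a p u : val p = (u, u, None) -> in_F (p, ~: S1 u).
Proof.
case: u => i t pE; apply/orP; left.
by apply/existsP; exists i; apply/existsP; exists t; rewrite /= pE !eqxx.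
Qed.

Lemma in_F_2b p u v : u.1 != v.1 -> val p = (u, v, Some v) ->
  in_F (p, ~: S2 u v).
Proof.
case: u v => [i t] [j s] /= ij pE; apply/orP; right; apply/orP; left.
apply/existsP; exists i; apply/existsP; exists j.
by apply/existsP; exists t; apply/existsP; exists s; rewrite /= ij pE !eqxx.
Qed.

Lemma in_F_3a p u v : u.1 != v.1 -> val p = (u, v, Some u) ->
  in_F (p, ~: S2 v u).
Proof.
case: u v => [i t] [j s] /= ij pE; do 2 (apply/orP; right); apply/orP; left.
apply/existsP; exists i; apply/existsP; exists j.
by apply/existsP; exists t; apply/existsP; exists s; rewrite /= ij pE !eqxx.
Qed.

Lemma in_F_4b p u v : u.1 != v.1 -> val p = (u, v, Some (inv_letter u)) ->
  in_F (p, S1 u).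
Proof.
case: u v => [i t] [j s] /= ij pE; do 3 (apply/orP; right); apply/orP; left.
apply/existsP; exists i; apply/existsP; exists j.
by apply/existsP; exists t; apply/existsP; exists s; rewrite /= ij pE !eqxx.
Qed.

Lemma in_F_5a p u v w : u.1 != v.1 -> v.1 != w.1 -> u.1 != w.1 ->
  val p = (u, v, Some w) -> in_F (p, ~: S2 v w).
Proof.
case: u v w => [i t] [j s] [k q] /= ij jk ik pE; do 4 (apply/orP; right).
apply/existsP; exists i; apply/existsP; exists j; apply/existsP; exists k.
apply/existsP; exists t; apply/existsP; exists s; apply/existsP; exists q.
by rewrite /= ij jk ik pE !eqxx.
Qed.

Definition prefix_set (A : {set Psi n}) : Prop :=
  [\/ exists u, A = S1 u, exists u, A = ~: S1 u
    | exists u v, u.1 != v.1 /\ A = ~: S2 u v].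

Lemma word_has_relation p : exists2 A, in_F (p, A) & prefix_set A.
Proof.
case: p => [[[u v] [w|]] /= pP]; last first.
  have /eqP uv := pP; subst v.
  by exists (~: S1 u); [apply: in_F_1a | constructor 2; exists u].
have /andP[uv wv] := pP.
have [wE | wNv] := eqVneq w v; first subst w.
  by exists (~: S2 u v); [apply: in_F_2b | constructor 3; exists u, v].
rewrite (negbTE wNv) /= in wv.
have vu : v.1 != u.1 by rewrite eq_sym.
have [wE | wNu] := eqVneq w u; first subst w.
  by exists (~: S2 v u); [apply: in_F_3a | constructor 3; exists v, u].
have [wu | uw] := eqVneq w.1 u.1.
  rewrite (eq_inv_letter wu wNu) in pP *.
  by exists (S1 u); [apply: (in_F_4b uv); reflexivity | constructor 1; exists u].
have vw : v.1 != w.1 by rewrite eq_sym.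
exists (~: S2 v w); first by apply: (in_F_5a uv vw); rewrite // eq_sym.
by constructor 3; exists v, w.
Qed.

Lemma in_Psi_word4b u v : u.1 != v.1 -> in_Psi (u, v, Some (inv_letter u)).
Proof. by move=> uv; apply/andP; split => //; apply/orP; right. Qed.

Definition word4b u v (uv : u.1 != v.1) : Psi n :=
  exist _ (u, v, Some (inv_letter u)) (in_Psi_word4b uv).

Lemma in_F_word4b u v (uv : u.1 != v.1) : in_F (word4b uv, S1 u).
Proof. by apply: (in_F_4b uv); reflexivity. Qed.

End Relations.

Section FF.
Variables (R : realType) (n : nat) (x : Psi n -> R).

Lemma f_rE r : f_r r x = odds (x r.1) * odds (\sum_(p in r.2) x p).
Proof. by []. Qed.

Lemma FF_ge0 : 0 <= FF x.
Proof. exact: bigmax_ge_id. Qed.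

Lemma f_r_le_FF r : in_F r -> f_r r x <= FF x.
Proof. exact: le_bigmax_cond. Qed.

End FF.

(* [1 / (B + 2)] bounds the mass of each S(xi_i^t) away from 0 and 1 and
   [c1 / (c1 + B)] the weight of each word of type 4b; their minimum bounds the
   mass of every Psi_r away from 0 and 1. *)
Definition mass_margin (R : realFieldType) (B : R) : R :=
  let c1 := 1 / (B + 2) in Num.min c1 (c1 / (c1 + B)).

Definition sublevel_margin (R : realFieldType) (B : R) : R :=
  mass_margin B / (mass_margin B + B).

Lemma mass_margin_gt0 (R : realFieldType) (B : R) : 0 <= B -> 0 < mass_margin B.
Proof.
move=> B_ge0; have c1_gt0 : 0 < 1 / (B + 2) by rewrite divr_gt0 // ltr_wpDl.
by rewrite lt_min c1_gt0 divr_gt0 // ltr_wpDr.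
Qed.

Lemma sublevel_margin_gt0 (R : realFieldType) (B : R) :
  0 <= B -> 0 < sublevel_margin B.
Proof.
by move=> B_ge0; rewrite divr_gt0 ?ltr_wpDr // mass_margin_gt0.
Qed.

Section Sublevel.
Variables (R : realType) (n : nat) (x : Psi n -> R) (B : R).
Hypotheses (n_gt1 : (1 < n)%N) (x_gt0 : forall p, 0 < x p).
Hypotheses (x_sum1 : \sum_p x p = 1) (FF_le : FF x <= B).

Let mass (A : {set Psi n}) := \sum_(p in A) x p.
Let c1 := 1 / (B + 2).
Let cD := c1 / (c1 + B).

Let B_ge0 : 0 <= B. Proof. exact: le_trans (FF_ge0 x) FF_le. Qed.
Let c1_gt0 : 0 < c1. Proof. by rewrite divr_gt0 // ltr_wpDl. Qed.

Let f_r_le r : in_F r -> odds (x r.1) * odds (mass r.2) <= B.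
Proof. by move=> /(f_r_le_FF x); rewrite f_rE => /le_trans; apply. Qed.

Lemma mass_S1_ge u : c1 <= mass (S1 u).
Proof.
have [j uj] := exists_neq_ord u.1 n_gt1.
have uv : u.1 != (j, true).1 by [].
apply: (odds_mul_le_lb_ge (a := x (word4b uv))); rewrite ?mass_le1 //.
  by rewrite /mass le_mass // inE.
exact: f_r_le (in_F_word4b uv).
Qed.

Lemma mass_S1_le u : mass (S1 u) <= 1 - c1.
Proof.
have sub : S1 u \subset ~: S1 (inv_letter u).
  by apply/fintype.subsetP => p; rewrite !inE => /eqP ->; rewrite inv_letter_neq.
have := mass_subset x_gt0 sub; rewrite mass_setC // /mass.
by have := mass_S1_ge (inv_letter u); rewrite /mass; lra.
Qed.

Lemma word4b_ge u v (uv : u.1 != v.1) : cD <= x (word4b uv).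
Proof.
apply: (odds_mul_le_lb (b := mass (S1 u))); rewrite ?weight_le1 //.
- exact: lt_le_trans c1_gt0 (mass_S1_ge u).
- exact: mass_S1_le.
- exact: f_r_le (in_F_word4b uv).
Qed.

Lemma mass_S2C_bounds u v : u.1 != v.1 -> c1 <= mass (~: S2 u v) <= 1 - cD.
Proof.
move=> uv; rewrite /mass mass_setC //; apply/andP; split.
  have sub : S1 (inv_letter u) \subset ~: S2 u v.
    apply/fintype.subsetP => p; rewrite !inE; apply: contraTN => /eqP -> /=.
    by rewrite inv_letter_neq.
  have := mass_subset x_gt0 sub; rewrite mass_setC //.
  by have := mass_S1_ge (inv_letter u); rewrite /mass; lra.
have := le_mass x_gt0 (_ : word4b uv \in S2 u v); rewrite inE eqxx => /(_ isT).
by have := word4b_ge uv; lra.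
Qed.

Lemma mass_prefix_set_bounds (A : {set Psi n}) :
  prefix_set A -> mass_margin B <= mass A <= 1 - mass_margin B.
Proof.
have c0_le_c1 : mass_margin B <= c1 by rewrite ge_min lexx.
have c0_le_cD : mass_margin B <= cD by rewrite ge_min lexx orbT.
case=> [[u ->] | [u ->] | [u [v [uv ->]]]].
- by have := mass_S1_ge u; have := mass_S1_le u; rewrite /mass => *; apply/andP; lra.
- rewrite /mass mass_setC //.
  by have := mass_S1_ge u; have := mass_S1_le u; rewrite /mass => *; apply/andP; lra.
- by have /andP[] := mass_S2C_bounds uv; rewrite /mass => *; apply/andP; lra.
Qed.

Lemma coord_ge_margin p : sublevel_margin B <= x p.
Proof.
have [A pA A_prefix] := word_has_relation p.
have /andP[A_ge A_le] := mass_prefix_set_bounds A_prefix.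
have c0_gt0 := mass_margin_gt0 B_ge0.
apply: (odds_mul_le_lb (b := mass A)); rewrite ?weight_le1 //.
- exact: lt_le_trans c0_gt0 A_ge.
- exact: f_r_le pA.
Qed.

End Sublevel.

Section Continuity.
Variable R : realType.

Lemma odds_continuous_at (T : topologicalType) (h : T -> R) t : h t != 0 ->
  {for t, continuous h} -> {for t, continuous (fun s => odds (h s))}.
Proof.
move=> ht0 h_cont; apply: continuousM; last exact: continuousV.
by apply: continuousB => //; apply: cvg_cst.
Qed.

Lemma sum_continuous (T : finType) (P : pred T) :
  continuous (fun g : T -> R => \sum_(p | P p) g p).
Proof.
apply: continuous_big => [|p _]; first exact: add_continuous.
exact: proj_continuous.
Qed.

Variable n : nat.

Lemma f_r_continuous_at (r : relation n) (t : Psi n -> R) :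
  (forall p, 0 < t p) -> {for t, continuous (f_r r)}.
Proof.
move=> t_gt0; have [r2_0|[p pr2]] := set_0Vmem r.2.
  (* With Psi_r empty, X_r = 0 and (1 - 0) / 0 = 0: f_r vanishes. *)
  have -> : @f_r R n r = fun=> 0.
    by apply: boolp.funext => g; rewrite f_rE r2_0 big_set0 /odds invr0 !mulr0.
  exact: cst_continuous.
apply: continuousM; apply: odds_continuous_at.
- by rewrite /x_r gt_eqF.
- exact: proj_continuous.
- by rewrite gt_eqF // (lt_le_trans (t_gt0 p)) // le_mass.
- exact: sum_continuous.
Qed.

Lemma FF_continuous_at (t : Psi n -> R) :
  (forall p, 0 < t p) -> {for t, continuous (@FF R n)}.
Proof.
move=> t_gt0.
have max_cont : continuous (fun z : R * R => Num.max z.1 z.2).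
  exact: max_continuous.
exact: (cvg_big max_cont _ (fun r _ => f_r_continuous_at (r := r) t_gt0)).
Qed.

End Continuity.

Lemma compact_box_simplex (R : realType) (T : finType) (a b : R) :
  compact ([set g : T -> R | forall p, `[a, b] (g p)] `&`
           [set g | \sum_p g p = 1]).
Proof.
apply: compact_closedI.
  have := @tychonoff T (fun=> R) (fun=> `[a, b])
    (fun=> segment_compact (a := a) (b := b)).
  exact.
apply: (preimage_closed (f := fun g : T -> R => \sum_p g p) (D := [set 1])).
  by move=> g _; apply: sum_continuous.
exact: closed_eq.
Qed.

Lemma inf_image_eq_min (T : Type) (R : realType) (f : T -> R) (D : set T) x :
  D x -> (forall y, D y -> f x <= f y) -> inf (f @` D) = f x.
Proof.
move=> Dx x_min; apply/eqP; rewrite eq_le; apply/andP; split.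
  by apply: ge_inf; [exists (f x) => _ [y Dy <-]; exact: x_min | exists x].
by apply: lb_le_inf; [exists (f x), x | move=> _ [y Dy <-]; exact: x_min].
Qed.

Lemma inf_attained_of_compact_sublevel (T : topologicalType) (R : realType)
    (f : T -> R) (D K : set T) x0 :
  D x0 -> K `<=` D -> (forall y, D y -> f y <= f x0 -> K y) ->
  compact K -> {within K, continuous f} -> exists2 x, D x & f x = inf (f @` D).
Proof.
move=> Dx0 KD sublevelK K_compact f_cont.
have Kx0 := sublevelK _ Dx0 (lexx _).
have [x /set_mem Kx x_min] := compact_EVT_min (ex_intro _ x0 Kx0) K_compact f_cont.
have K_min y : K y -> f x <= f y by move=> Ky; apply: x_min; apply/mem_set.
exists x; first exact: KD.
apply/esym/inf_image_eq_min => [|y Dy]; first exact: KD.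
have [fy_le | /ltW fx0_le] := leP (f y) (f x0); first exact/K_min/sublevelK.
exact: le_trans (K_min _ Kx0) fx0_le.
Qed.

Lemma uniform_in_Delta (R : realType) n : (0 < n)%N ->
  @Delta R n (fun=> #|Psi n|%:R^-1).
Proof.
move=> n_gt0; pose i0 := Ordinal n_gt0.
have w0 : in_Psi ((i0, true), (i0, true), None) by rewrite /= eqxx.
have card_gt0 : (0 < #|Psi n|)%N.
  by apply/card_gt0P; exists (exist _ ((i0, true), (i0, true), None) w0 : Psi n).
split => [p|]; first by rewrite invr_gt0 ltr0n.
by rewrite sumr_const -[_ *+ #|xpredT|]mulr_natr mulVf // pnatr_eq0 -lt0n.
Qed.

Theorem lemma5p2 (R : realType) (n : nat) (hn : (2 <= n)%N) :
  exists x : Psi n -> R,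
    @Delta R n x /\ FF x = inf [set FF y | y in @Delta R n].
Proof.
have x0D := uniform_in_Delta R (ltnW hn).
set x0 := fun=> _ in x0D.
pose d := sublevel_margin (FF x0).
have d_gt0 : 0 < d by apply/sublevel_margin_gt0/FF_ge0.
pose K := [set g : Psi n -> R | forall p, `[d, 1] (g p)] `&`
          [set g | \sum_p g p = 1].
have KD : K `<=` @Delta R n.
  move=> g [g_box g_sum1]; split=> // p.
  by have := g_box p; rewrite /= in_itv => /andP[/(lt_le_trans d_gt0)].
have sublevelK y : @Delta R n y -> FF y <= FF x0 -> K y.
  move=> [y_gt0 y_sum1] y_le; split=> // p; rewrite /= in_itv /=.
  by rewrite (coord_ge_margin hn y_gt0 y_sum1 y_le) (weight_le1 y_gt0 y_sum1).
have FF_cont : {within K, continuous (@FF R n)}.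
  apply: continuous_in_subspaceT => g /set_mem /KD [g_gt0 _].
  exact: FF_continuous_at.
have [x xD x_inf] := inf_attained_of_compact_sublevel x0D KD sublevelK
  (@compact_box_simplex R (Psi n) d 1) FF_cont.
by exists x.
Qed.
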